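(* For any stationary process over a finite alphabet and every $L\ge2$, $$h'_\mu(L)-h_\mu(L)\ \ge\ \frac{\mathbf{E}'(L)}{L}.$$
   Context: $H(L)$ is the Shannon entropy (base 2) of $S_1\cdots S_L$, $H(0)=0$; $h_\mu(L)=H(L)-H(L-1)$; $h'_\mu(L)=H(L)/L$. For even $L$, $\mathbf{E}'(L)=I[S_1\cdots S_{L/2};\,S_{L/2+1}\cdots S_L]$ (mutual information between the two halves of an $L$-block); for odd $L$, $\mathbf{E}'(L)=\mathbf{E}'(L-1)$. *)

From mathcomp Require Import all_boot all_order all_algebra.
From mathcomp Require Import reals exp.
Set Implicit Arguments. Unset Strict Implicit. Unset Printing Implicit Defensive.
Import Order.TTheory GRing.Theory Num.Theory.
Local Open Scope ring_scope.

Section Entropy.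
Variables (R : realType) (A : finType).

(* A process over A is given by its family of finite-dimensional block
   distributions: blk L w = Pr[S_1 ... S_L = w]. *)
Definition blocks := forall L : nat, L.-tuple A -> R.

Definition stationary_process (blk : blocks) : Prop :=
  [/\ forall L (w : L.-tuple A), 0 <= blk L w,
      blk 0 [tuple] = 1,
      forall L (w : L.-tuple A), blk L w = \sum_(a : A) blk L.+1 [tuple of rcons w a]
    & (* stationarity: marginalizing the first symbol gives the same law *)
      forall L (w : L.-tuple A), blk L w = \sum_(a : A) blk L.+1 [tuple of a :: w]].

Definition log2 (x : R) : R := ln x / ln 2.

Definition xlog2x (x : R) : R := if x == 0 then 0 else x * log2 x.

Definition block_entropy (blk : blocks) (L : nat) : R :=
  - \sum_(w : L.-tuple A) xlog2x (blk L w).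

Definition entropy_rate_est (blk : blocks) (L : nat) : R :=
  block_entropy blk L - block_entropy blk L.-1.

Definition entropy_rate_est' (blk : blocks) (L : nat) : R :=
  block_entropy blk L / L%:R.

Definition halves_mutual_info (blk : blocks) (m : nat) : R :=
  let pxy := fun (x y : m.-tuple A) => blk (m + m)%N [tuple of x ++ y] in
  \sum_(x : m.-tuple A) \sum_(y : m.-tuple A)
     (if pxy x y == 0 then 0
      else pxy x y * log2 (pxy x y /
             ((\sum_(y' : m.-tuple A) pxy x y') * (\sum_(x' : m.-tuple A) pxy x' y)))).

(* E'(L): for even L the mutual information between the two halves of the
   L-block; for odd L, E'(L) = E'(L-1).  In both cases the half length is L./2. *)
Definition excess_entropy_est' (blk : blocks) (L : nat) : R :=
  halves_mutual_info blk L./2.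

End Entropy.

From mathcomp Require Import all_boot all_order all_algebra.
From mathcomp Require Import reals exp.
From mathcomp Require Import lra ring zify.
Set Implicit Arguments. Unset Strict Implicit. Unset Printing Implicit Defensive.
Import Order.TTheory GRing.Theory Num.Theory.
Local Open Scope ring_scope.

(* Write S(n) for the sum of p(w) ln p(w) over the words w of length n, so that
   H(n) = - S(n) / ln 2.  Nonnegativity of the mutual information between the
   first and the last symbol of an (n+2)-block, conditionally on its middle
   n-block, gives with stationarity S(n+1) + S(n+1) <= S(n) + S(n+2): the block
   entropy H is concave, and H(0) = 0.  With m = L/2 (rounded down),
   E'(L) = 2 H(m) - H(2m) and L (h'(L) - h(L)) = H(L) - L (H(L) - H(L-1)).
   In terms of the increments d_i = H(i+1) - H(i) these are
   sum_(i<m) (d_i - d_(m+i)) and sum_(i<L) (d_i - d_(L-1)); since the d_i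
   decrease and 2m <= L, the first sum is dominated term by term. *)

Section TupleSums.
Variables (V : nmodType) (A : finType).
Implicit Type F : seq A -> V.

Lemma sum_tuple0 F : \sum_(t : 0.-tuple A) F t = F [::].
Proof. by rewrite (big_pred1 [tuple]) // => t; apply/esym/eqP; exact: tuple0. Qed.

Lemma sum_tuple_cons n F :
  \sum_(t : n.+1.-tuple A) F t = \sum_(a : A) \sum_(t : n.-tuple A) F (a :: t).
Proof.
rewrite pair_big (reindex (fun u : A * n.-tuple A => [tuple of u.1 :: u.2])) //=.
exists (fun t : n.+1.-tuple A => (thead t, [tuple of behead t])).
  by move=> [a t] _; congr pair; apply: val_inj.
by move=> [[|a s] st] _; apply: val_inj.
Qed.

Lemma sum_tuple_rev n F :
  \sum_(t : n.-tuple A) F t = \sum_(t : n.-tuple A) F (rev t).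
Proof.
rewrite (reindex_inj (h := fun t : n.-tuple A => [tuple of rev t])) //.
by move=> s t /(congr1 (fun u : n.-tuple A => rev (val u))); rewrite /= !revK => /val_inj.
Qed.

Lemma sum_tuple_rcons n F :
  \sum_(t : n.+1.-tuple A) F t = \sum_(t : n.-tuple A) \sum_(a : A) F (rcons t a).
Proof.
rewrite sum_tuple_rev (sum_tuple_cons n (F \o rev)) [RHS]exchange_big /=.
apply: eq_bigr => a _; rewrite [RHS](sum_tuple_rev n (fun s => F (rcons s a))).
by apply: eq_bigr => t _; rewrite rev_cons.
Qed.

Lemma sum_tuple_cat m k F :
  \sum_(t : (m + k).-tuple A) F t = \sum_(x : m.-tuple A) \sum_(y : k.-tuple A) F (x ++ y).
Proof.
elim: m F => [|m IHm] F.
  by rewrite (sum_tuple0 (fun s => \sum_(y : k.-tuple A) F (s ++ y))).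
rewrite [LHS](sum_tuple_cons (m + k)).
rewrite (sum_tuple_cons m (fun s => \sum_(y : k.-tuple A) F (s ++ y))).
by apply: eq_bigr => a _; rewrite (IHm (fun s => F (a :: s))).
Qed.

End TupleSums.

Section ConcaveSequence.
Variables (R : realDomainType) (H : nat -> R).
Hypothesis H_concave : forall n, H n + H n.+2 <= H n.+1 + H n.+1.

Lemma concave_incr_le i j : (i <= j)%N -> H j.+1 - H j <= H i.+1 - H i.
Proof.
move=> /subnK <-; elim: (j - i)%N => [|k IHk] //=.
by apply: le_trans IHk; rewrite addSn; have := H_concave (k + i); lra.
Qed.

Lemma concave_excess_le m L : H 0 = 0 -> (0 < L)%N -> (m + m <= L)%N ->
  H m + H m - H (m + m) <= H L - L%:R * (H L - H L.-1).
Proof.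
move=> H0 L_gt0 le_mmL; pose d i := H i.+1 - H i.
have HE n : H n = \sum_(0 <= i < n) d i by rewrite telescope_sumr // H0 subr0.
have HmmE : H (m + m) - H m = \sum_(0 <= i < m) d (i + m).
  by rewrite -telescope_sumr ?leq_addl // -{1}[m]add0n big_addn addnK.
have -> : H L - L%:R * (H L - H L.-1) = \sum_(0 <= i < L) (d i - d L.-1).
  rewrite sumrB sumr_const_nat subn0 -HE mulr_natl.
  by rewrite /d prednK.
rewrite (big_cat_nat (n := m)) //=; last by lia.
have -> : H m + H m - H (m + m) = \sum_(0 <= i < m) (d i - d (i + m)).
  by rewrite sumrB -HmmE -HE; lra.
rewrite -[X in X <= _]addr0; apply: lerD.
  apply: ler_sum_nat => i /andP[_ lt_im]; rewrite lerD2l lerN2.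
  by rewrite /d -(prednK L_gt0); apply: concave_incr_le; lia.
rewrite big_nat; apply: sumr_ge0 => i /andP[_ lt_iL]; rewrite subr_ge0 /d -(prednK L_gt0).
by apply: concave_incr_le; lia.
Qed.

End ConcaveSequence.

Lemma ler_sum_term (R : numDomainType) (I : finType) (F : I -> R) i :
  (forall j, 0 <= F j) -> F i <= \sum_j F j.
Proof. by move=> F_ge0; rewrite (bigD1 i) //= lerDl sumr_ge0. Qed.

Section Gibbs.
Variable R : realType.

Definition xlnx (x : R) : R := x * ln x.

Lemma ln_le_subr1 (x : R) : 0 < x -> ln x <= x - 1.
Proof. by move=> x_gt0; have := expR_ge1Dx (ln x); rewrite lnK ?posrE //; lra. Qed.

Lemma gibbs (I : finType) (p q : I -> R) :
    (forall i, 0 <= p i) -> (forall i, 0 <= q i) -> (forall i, 0 < p i -> 0 < q i) ->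
  \sum_i p i * ln (q i) <= \sum_i xlnx (p i) + \sum_i q i - \sum_i p i.
Proof.
move=> p_ge0 q_ge0 pq_gt0; rewrite -big_split -sumrB /=; apply: ler_sum => i _.
have [->|p_neq0] := eqVneq (p i) 0; first by rewrite /xlnx !mul0r add0r subr0.
have p_gt0 : 0 < p i by rewrite lt0r p_neq0 p_ge0.
have q_gt0 := pq_gt0 i p_gt0.
have := ler_wpM2l (ltW p_gt0) (ln_le_subr1 (divr_gt0 q_gt0 p_gt0)).
rewrite ln_div ?posrE // !mulrBr mulrCA divff ?mulr1 ?gt_eqF // /xlnx; lra.
Qed.

(* Nonnegativity of the mutual information of the unnormalised joint weights P. *)
Lemma xlnx_marginals_le (X Z : finType) (P : X -> Z -> R) :
    (forall x z, 0 <= P x z) ->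
  \sum_x xlnx (\sum_z P x z) + \sum_z xlnx (\sum_x P x z)
    <= xlnx (\sum_x \sum_z P x z) + \sum_x \sum_z xlnx (P x z).
Proof.
move=> P_ge0; set px := fun x => \sum_z P x z; set pz := fun z => \sum_x P x z.
set T := \sum_x px x.
have px_ge0 x : 0 <= px x by apply: sumr_ge0.
have pz_ge0 z : 0 <= pz z by apply: sumr_ge0.
have T_ge0 : 0 <= T by apply: sumr_ge0.
have pzT : \sum_z pz z = T by rewrite exchange_big.
have P_gt0 x z : 0 < P x z -> [/\ 0 < px x, 0 < pz z & 0 < T].
  move=> P_gt0; have px_gt0 := lt_le_trans P_gt0 (ler_sum_term z (P_ge0 x)).
  split=> //; first exact: lt_le_trans P_gt0 (ler_sum_term x (P_ge0^~ z)).
  exact: lt_le_trans px_gt0 (ler_sum_term x px_ge0).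
have sum_q : \sum_x \sum_z px x * pz z / T = T.
  under eq_bigr => x _ do rewrite -mulr_suml -mulr_sumr pzT.
  rewrite -mulr_suml -mulr_suml.
  by rewrite -/T; have [->|T_neq0] := eqVneq T 0; rewrite ?mul0r ?mulfK.
have sum_P_ln_q : \sum_x \sum_z P x z * ln (px x * pz z / T)
    = \sum_x xlnx (px x) + \sum_z xlnx (pz z) - xlnx T.
  transitivity (\sum_x \sum_z (P x z * ln (px x) + P x z * ln (pz z) - P x z * ln T)).
    apply: eq_bigr => x _; apply: eq_bigr => z _.
    have [->|P_neq0] := eqVneq (P x z) 0; first by rewrite !mul0r !addr0 subr0.
    have [px_gt0 pz_gt0 T_gt0] : [/\ 0 < px x, 0 < pz z & 0 < T].
      by apply: P_gt0; rewrite lt0r P_neq0 P_ge0.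
    by rewrite ln_div ?lnM ?posrE ?mulr_gt0 // mulrBr mulrDr.
  have sum_ln_px : \sum_x \sum_z P x z * ln (px x) = \sum_x xlnx (px x).
    by apply: eq_bigr => x _; rewrite -mulr_suml.
  have sum_ln_pz : \sum_x \sum_z P x z * ln (pz z) = \sum_z xlnx (pz z).
    by rewrite exchange_big; apply: eq_bigr => z _; rewrite -mulr_suml.
  have sum_ln_T : \sum_x \sum_z P x z * ln T = xlnx T.
    by under eq_bigr => x _ do rewrite -mulr_suml; rewrite -mulr_suml.
  under eq_bigr => x _ do rewrite sumrB big_split.
  by rewrite sumrB big_split /= sum_ln_px sum_ln_pz sum_ln_T.
have q_ge0 (u : X * Z) : 0 <= px u.1 * pz u.2 / T by rewrite divr_ge0 ?mulr_ge0.
have q_gt0 (u : X * Z) : 0 < P u.1 u.2 -> 0 < px u.1 * pz u.2 / T.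
  by move=> /P_gt0[? ? ?]; rewrite divr_gt0 ?mulr_gt0.
have := gibbs (fun u => P_ge0 u.1 u.2) q_ge0 q_gt0.
rewrite -(pair_bigA _ (fun x z => px x * pz z / T)) sum_q.
rewrite -(pair_bigA _ (fun x z => P x z * ln (px x * pz z / T))) sum_P_ln_q.
rewrite -(pair_bigA _ (fun x z => xlnx (P x z))) -(pair_bigA _ (fun x z => P x z)) /=.
change (\sum_x \sum_z P x z) with T; lra.
Qed.

End Gibbs.

Section StationaryProcess.
Variables (R : realType) (A : finType) (blk : blocks R A).
Hypothesis blk_process : stationary_process blk.
Arguments blk : clear implicits.

Definition word_prob (s : seq A) : R := blk (size s) (in_tuple s).

Lemma blk_word_prob n (t : n.-tuple A) : blk n t = word_prob t.
Proof.
case: t => s size_s; rewrite /word_prob /=; move/eqP: (size_s) => n_eq; subst n.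
by congr (blk _ _); apply: val_inj.
Qed.

Lemma word_prob_ge0 s : 0 <= word_prob s.
Proof. by case: blk_process => ge0 _ _ _; apply: ge0. Qed.

Lemma word_prob_nil : word_prob [::] = 1.
Proof. by case: blk_process => _ blk0 _ _; rewrite -blk0 -(blk_word_prob [tuple]). Qed.

Lemma word_prob_cons s : word_prob s = \sum_(a : A) word_prob (a :: s).
Proof.
case: blk_process => _ _ _ shift; rewrite {1}/word_prob shift.
by apply: eq_bigr => a _; apply: blk_word_prob.
Qed.

Lemma word_prob_rcons s : word_prob s = \sum_(a : A) word_prob (rcons s a).
Proof.
case: blk_process => _ _ consistent _; rewrite {1}/word_prob consistent.
by apply: eq_bigr => a _; apply: blk_word_prob.
Qed.

Lemma sum_word_prob_catl k y : \sum_(x : k.-tuple A) word_prob (x ++ y) = word_prob y.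
Proof.
elim: k => [|k IHk]; first by rewrite (sum_tuple0 (fun s => word_prob (s ++ y))).
rewrite (sum_tuple_cons k (fun s => word_prob (s ++ y))) exchange_big -[RHS]IHk.
by apply: eq_bigr => x _; rewrite [RHS]word_prob_cons.
Qed.

Lemma sum_word_prob_catr k x : \sum_(y : k.-tuple A) word_prob (x ++ y) = word_prob x.
Proof.
elim: k => [|k IHk]; first by rewrite (sum_tuple0 (fun s => word_prob (x ++ s))) cats0.
rewrite (sum_tuple_rcons k (fun s => word_prob (x ++ s))) -[RHS]IHk.
apply: eq_bigr => y _; rewrite [RHS]word_prob_rcons.
by apply: eq_bigr => a _; rewrite rcons_cat.
Qed.

Lemma word_prob_catl_le x y : word_prob (x ++ y) <= word_prob y.
Proof.
rewrite -(sum_word_prob_catl (size x) y).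
by apply: (ler_sum_term (in_tuple x)) => t; apply: word_prob_ge0.
Qed.

Lemma word_prob_catr_le x y : word_prob (x ++ y) <= word_prob x.
Proof.
rewrite -(sum_word_prob_catr (size y) x).
by apply: (ler_sum_term (in_tuple y)) => t; apply: word_prob_ge0.
Qed.

Definition neg_entropy n : R := \sum_(t : n.-tuple A) xlnx (word_prob t).

Lemma block_entropyE n : block_entropy blk n = - neg_entropy n / ln 2.
Proof.
rewrite /block_entropy /neg_entropy mulNr mulr_suml; congr (- _).
apply: eq_bigr => t _; rewrite /xlog2x /log2 /xlnx blk_word_prob.
by case: eqP => [->|_]; rewrite ?mul0r ?mulrA.
Qed.

Lemma neg_entropy_convex n :
  neg_entropy n.+1 + neg_entropy n.+1 <= neg_entropy n + neg_entropy n.+2.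
Proof.
pose P (w : n.-tuple A) a b := word_prob (a :: rcons w b).
have cons_marginal : neg_entropy n.+1 = \sum_w \sum_a xlnx (\sum_b P w a b).
  rewrite /neg_entropy (sum_tuple_cons n (fun s => xlnx (word_prob s))) exchange_big.
  by apply: eq_bigr => w _; apply: eq_bigr => a _; rewrite [word_prob (a :: w)]word_prob_rcons.
have rcons_marginal : neg_entropy n.+1 = \sum_w \sum_b xlnx (\sum_a P w a b).
  rewrite /neg_entropy (sum_tuple_rcons n (fun s => xlnx (word_prob s))).
  by apply: eq_bigr => w _; apply: eq_bigr => b _; rewrite [word_prob (rcons w b)]word_prob_cons.
have middle_marginal : neg_entropy n = \sum_w xlnx (\sum_a \sum_b P w a b).
  apply: eq_bigr => w _; rewrite [word_prob w]word_prob_cons.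
  by congr xlnx; apply: eq_bigr => a _; rewrite [word_prob (a :: w)]word_prob_rcons.
have joint : neg_entropy n.+2 = \sum_w \sum_a \sum_b xlnx (P w a b).
  rewrite /neg_entropy (sum_tuple_cons n.+1 (fun s => xlnx (word_prob s))) [RHS]exchange_big.
  by apply: eq_bigr => a _; rewrite (sum_tuple_rcons n (fun s => xlnx (word_prob (a :: s)))).
rewrite [X in X + _]cons_marginal rcons_marginal middle_marginal joint -!big_split /=.
by apply: ler_sum => w _; apply: xlnx_marginals_le => a b; apply: word_prob_ge0.
Qed.

Lemma block_entropy0 : block_entropy blk 0 = 0.
Proof.
rewrite block_entropyE /neg_entropy (sum_tuple0 (fun s => xlnx (word_prob s))).
by rewrite word_prob_nil /xlnx ln1 mulr0 oppr0 mul0r.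
Qed.

Lemma block_entropy_concave n :
  block_entropy blk n + block_entropy blk n.+2
    <= block_entropy blk n.+1 + block_entropy blk n.+1.
Proof.
have ln2_gt0 : 0 < ln (2 : R) by rewrite ln_gt0 // ltr1n.
rewrite !block_entropyE !mulNr -!opprD -!mulrDl lerN2 ler_pM2r ?invr_gt0 //.
exact: neg_entropy_convex.
Qed.

Lemma halves_mutual_info_neg_entropy m : halves_mutual_info blk m
  = (neg_entropy (m + m) - neg_entropy m - neg_entropy m) / ln 2.
Proof.
have row_sum (x : m.-tuple A) :
    \sum_(y : m.-tuple A) blk (m + m) [tuple of x ++ y] = word_prob x.
  by rewrite -(sum_word_prob_catr m x); apply: eq_bigr => y _; apply: blk_word_prob.
have col_sum (y : m.-tuple A) :
    \sum_(x : m.-tuple A) blk (m + m) [tuple of x ++ y] = word_prob y.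
  by rewrite -(sum_word_prob_catl m y); apply: eq_bigr => x _; apply: blk_word_prob.
rewrite /halves_mutual_info /=.
transitivity (\sum_(x : m.-tuple A) \sum_(y : m.-tuple A) (xlnx (word_prob (x ++ y))
    - word_prob (x ++ y) * ln (word_prob x) - word_prob (x ++ y) * ln (word_prob y)) / ln 2).
  apply: eq_bigr => x _; apply: eq_bigr => y _.
  rewrite row_sum col_sum blk_word_prob /=.
  have [->|pxy_neq0] := eqVneq (word_prob (x ++ y)) 0; first by rewrite /xlnx !(mul0r, subr0).
  have pxy_gt0 : 0 < word_prob (x ++ y) by rewrite lt0r pxy_neq0 word_prob_ge0.
  have px_gt0 := lt_le_trans pxy_gt0 (word_prob_catr_le x y).
  have py_gt0 := lt_le_trans pxy_gt0 (word_prob_catl_le x y).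
  by rewrite /log2 ln_div ?lnM ?posrE ?mulr_gt0 // /xlnx; ring.
under eq_bigr do rewrite -mulr_suml; rewrite -mulr_suml; congr (_ / _).
under eq_bigr do rewrite !sumrB; rewrite !sumrB.
rewrite /neg_entropy (sum_tuple_cat m m (fun s => xlnx (word_prob s))).
congr (_ - _ - _).
  by apply: eq_bigr => x _; rewrite -mulr_suml sum_word_prob_catr.
by rewrite exchange_big; apply: eq_bigr => y _; rewrite -mulr_suml sum_word_prob_catl.
Qed.

Lemma halves_mutual_infoE m : halves_mutual_info blk m
  = block_entropy blk m + block_entropy blk m - block_entropy blk (m + m).
Proof. by rewrite halves_mutual_info_neg_entropy !block_entropyE; ring. Qed.

End StationaryProcess.

Theorem proposition14 (R : realType) (A : finType) (blk : blocks R A)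
    (hproc : stationary_process blk) (L : nat) (hL : (2 <= L)%N) :
  entropy_rate_est' blk L - entropy_rate_est blk L
    >= excess_entropy_est' blk L / L%:R.
Proof.
rewrite /entropy_rate_est' /entropy_rate_est /excess_entropy_est'.
rewrite (halves_mutual_infoE hproc).
set H := block_entropy blk; set m := L./2.
have le_mmL : (m + m <= L)%N by rewrite addnn halfK leq_subr.
have L_gt0 : (0 < L)%N by apply: ltnW.
have excess_le := concave_excess_le (block_entropy_concave hproc) (block_entropy0 hproc)
  L_gt0 le_mmL.
have -> : H L / L%:R - (H L - H L.-1) = (H L - L%:R * (H L - H L.-1)) / L%:R.
  by rewrite mulrBl mulrAC mulfV ?mul1r ?pnatr_eq0 -?lt0n.
by rewrite ler_pM2r ?invr_gt0 ?ltr0n.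
Qed.
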